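(* Let $a,b\in\mathbb{Q}_3$ with $\gamma(a)=1$, $\gamma(b)=0$, and let $x=\sum_{t\ge0}x_t3^t\in\mathbb{Z}_3^*$ be such that $A_k\equiv0\pmod3$ for all $k\in\mathbb{N}$. Then $x$ is a solution of $x^3+ax=b$ if and only if the digits of $x$ satisfy the system of congruences $$x_0^3\equiv b_0\pmod3,\qquad x_0a_0+M_1(x_0)\equiv b_1\pmod3,$$ and for every $j\ge1$, $$x_{j-1}a_j+x_{j-2}a_{j+1}+\dots+x_0a_{2j-1}+S_{2j}^j+M_{2j}(x_0,\dots,x_{j-1})\equiv b_{2j}\pmod3,$$ $$(A_j-x_0x_j)x_j+x_{j-1}a_{j+1}+x_{j-2}a_{j+2}+\dots+x_0a_{2j}+S_{2j+1}^j+M_{2j+1}(x_0,\dots,x_{j-1})\equiv b_{2j+1}\pmod3,$$ where the integers $M$ are defined by $$3M_1(x_0)=x_0^3-b_0,\qquad 3M_2(x_0)=x_0a_0+M_1(x_0)-b_1,$$ $$3M_{2j+1}(x_0,\dots,x_{j-1})=x_{j-1}a_j+\dots+x_0a_{2j-1}+S_{2j}^j+M_{2j}(x_0,\dots,x_{j-1})-b_{2j},$$ $$3M_{2j+2}(x_0,\dots,x_j)=(A_j-x_0x_j)x_j+x_{j-1}a_{j+1}+\dots+x_0a_{2j}+S_{2j+1}^j+M_{2j+1}(x_0,\dots,x_{j-1})-b_{2j+1}.$$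
   Context: Write $a=3^{\gamma(a)}(a_0+a_13+a_23^2+\dots)$, $b=3^{\gamma(b)}(b_0+b_13+b_23^2+\dots)$ in canonical form, with digits $a_j,b_j\in\{0,1,2\}$, $a_0,b_0\ne0$, $\gamma(a),\gamma(b)\in\mathbb{Z}$. $\mathbb{Z}_3^*$ is the set of $3$-adic units; $x\in\mathbb{Z}_3^*$ is written $x=x_0+x_13+x_23^2+\dots$ with $x_j\in\{0,1,2\}$, $x_0\ne0$. Define $A_0=x_0^2+a_0$ and, for $k\ge1$, $A_k=\frac{A_{k-1}}{3}+a_k+R_k$ with $R_k=\sum_{j=0}^kx_jx_{k-j}$. For $j\le k$, $P_k^j(x_0,\dots,x_{j-1})=\sum\frac{6}{m_0!\cdots m_{j-1}!}x_0^{m_0}\cdots x_{j-1}^{m_{j-1}}$, the sum over nonnegative integers $m_0,\dots,m_{j-1}$ with $\sum_{i=0}^{j-1}m_i=3$ and $\sum_{i=1}^{j-1}im_i=k$. For $s$ a positive integer define $$S_j^i=\begin{cases}\frac{P_{j-1}^i}{3}, & j=3s-1,\\ \frac{P_{j-1}^i}{3}+x_{j/3}^3, & j=3s,\\ \frac{P_{j-1}^i-x_{(j-1)/3}^3}{3}, & j=3s+1.\end{cases}$$ *)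

(* 3-adic numbers are represented by their canonical
   digit expansions (digits in {0,1,2}). *)
From mathcomp Require Import all_boot all_order all_algebra.
Set Implicit Arguments.
Unset Strict Implicit.
Unset Printing Implicit Defensive.
Import Order.TTheory GRing.Theory Num.Theory.
Local Open Scope ring_scope.

Definition digits3 (d : nat -> nat) : Prop := forall j, (d j < 3)%N.

Definition trunc3 (d : nat -> nat) (n : nat) : int :=
  \sum_(i < n) ((d i)%:Z * (3 ^+ i)).

(* Equality in Z_3 = inverse limit of Z/3^n: with
   a = 3^1 (a_0 + a_1 3 + ...), b = b_0 + b_1 3 + ..., x = x_0 + x_1 3 + ...,
   x^3 + a x = b holds iff it holds modulo 3^n for every n. *)
Definition solves_cubic3 (a b x : nat -> nat) : Prop :=
  forall n : nat,
    (((3 ^+ n : int) %| (trunc3 x n ^+ 3 + 3 * trunc3 a n * trunc3 x n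
                          - trunc3 b n))%Z).

Definition cong3 (u v : rat) : Prop := exists z : int, u - v = 3 * z%:~R.

Section Quantities.
Variables (a b x : nat -> nat).
Local Notation "'x_ i" := ((x i)%:R : rat) (at level 8, i at level 2).
Local Notation "'a_ i" := ((a i)%:R : rat) (at level 8, i at level 2).
Local Notation "'b_ i" := ((b i)%:R : rat) (at level 8, i at level 2).

Definition Rk (k : nat) : rat := \sum_(0 <= j < k.+1) 'x_j * 'x_(k - j).

Fixpoint Ak (k : nat) : rat :=
  match k with
  | 0 => 'x_0 ^+ 2 + 'a_0
  | k'.+1 => Ak k' / 3 + 'a_(k'.+1) + Rk k'.+1
  end.

(* P_k^j(x_0,...,x_{j-1}) = sum over m_0..m_{j-1} >= 0 with sum m_i = 3,
   sum i m_i = k of 6/(m_0!...m_{j-1}!) x_0^{m_0}...x_{j-1}^{m_{j-1}}.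
   (The constraint sum m_i = 3 forces m_i <= 3, so m ranges over 'I_4.) *)
Definition Pkj (k j : nat) : rat :=
  \sum_(m : {ffun 'I_j -> 'I_4} |
          ((\sum_(i < j) (m i : nat))%N == 3%N) &&
          ((\sum_(i < j) (i * m i)%N)%N == k))
     (6 / (\prod_(i < j) ((m i)`!)%:R) * \prod_(i < j) 'x_i ^+ (m i)).

Definition Sji (j i : nat) : rat :=
  if (j %% 3 == 2)%N then Pkj j.-1 i / 3
  else if (j %% 3 == 0)%N then Pkj j.-1 i / 3 + 'x_(j %/ 3) ^+ 3
  else (Pkj j.-1 i - 'x_(j.-1 %/ 3) ^+ 3) / 3.

Definition Eeven (j : nat) : rat :=
  \sum_(1 <= i < j.+1) 'x_(j - i) * 'a_(j + i - 1).

Definition Eodd (j : nat) : rat :=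
  \sum_(1 <= i < j.+1) 'x_(j - i) * 'a_(j + i).

(* the left-hand side of the n-th congruence, without the M_n term:
   n = 0: x_0^3;  n = 1: x_0 a_0;
   n = 2j: x_{j-1}a_j+...+x_0a_{2j-1} + S_{2j}^j;
   n = 2j+1: (A_j - x_0 x_j) x_j + x_{j-1}a_{j+1}+...+x_0a_{2j} + S_{2j+1}^j *)
Definition Lhs (n : nat) : rat :=
  if n is 0 then 'x_0 ^+ 3
  else if n is 1 then 'x_0 * 'a_0
  else if ~~ odd n then Eeven n./2 + Sji n n./2
  else (Ak n./2 - 'x_0 * 'x_(n./2)) * 'x_(n./2) + Eodd n./2 + Sji n n./2.

(* M_0 := 0 (convention), 3 M_{n+1} = Lhs n + M_n - b_n, i.e.
   3M_1 = x_0^3 - b_0, 3M_2 = x_0a_0 + M_1 - b_1,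
   3M_{2j+1} = ... + S_{2j}^j + M_{2j} - b_{2j},
   3M_{2j+2} = (A_j - x_0x_j)x_j + ... + S_{2j+1}^j + M_{2j+1} - b_{2j+1}. *)
Fixpoint Mn (n : nat) : rat :=
  match n with
  | 0 => 0
  | n'.+1 => (Lhs n' + Mn n' - 'b_n') / 3
  end.

End Quantities.

(* Let T_N, U_N, B_N be the truncations below 3^N of x, a/3 and b, and L_n the
   left-hand side of the n-th congruence, so that unrolling the recursion gives
   3^N M_N = sum_(n<N) L_n 3^n - B_N.  The heart of the proof is that, when all
   A_k are integers, sum_(n<N) L_n 3^n = T_N^3 + 3 U_N T_N (mod 3^N).  Multiplied
   by 3^n, L_n splits into three parts:
   - for n = 2j+1, the term 3^(2j+1) x_j (A_j - x_0 x_j).  Since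
     3^j A_j = U_(j+1) + sum_(k<=j) R_k 3^k and the R_k are the coefficients of
     (sum_(i<=j) x_i t^i)^2, these terms collect the products x_j a_q with
     q <= j, and the coefficients of index at most 2j of the change of the cube
     (sum_(i<j) x_i t^i)^3 when the digit x_j is added;
   - the sums E, which collect the products x_p a_q with p < q;
   - the S-terms, in which P_k^j is the k-th coefficient of (sum_(i<j) x_i t^i)^3
     by the multinomial theorem.  They collect the remaining coefficients of the
     cube; the one left over at the boundary index is controlled by Frobenius,
     (sum_i x_i t^i)^3 = sum_i x_i^3 t^(3i) (mod 3).
   Hence x^3 + a x = b (mod 3^N) iff M_N is an integer, and M_(n+1) is an
   integer exactly when the n-th congruence holds. *)

From mathcomp Require Import all_boot all_order all_algebra.
From mathcomp Require Import ring zify.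
Import Order.TTheory GRing.Theory Num.Theory.
Set Implicit Arguments.
Unset Strict Implicit.
Unset Printing Implicit Defensive.
Local Open Scope ring_scope.

Definition pow3_dvd (N : nat) (v : rat) : bool := v / 3%:R ^+ N \is a Num.int.

Lemma pow3_dvdD N u v : pow3_dvd N u -> pow3_dvd N v -> pow3_dvd N (u + v).
Proof. by rewrite /pow3_dvd mulrDl; apply: rpredD. Qed.

Lemma pow3_dvd_sum N (I : Type) (r : seq I) (P : pred I) (F : I -> rat) :
  (forall i, P i -> pow3_dvd N (F i)) -> pow3_dvd N (\sum_(i <- r | P i) F i).
Proof. by move=> dvdF; rewrite /pow3_dvd mulr_suml rpred_sum. Qed.

Lemma pow3_dvd_expM N k u :
  (N <= k)%N -> u \is a Num.int -> pow3_dvd N (3%:R ^+ k * u).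
Proof.
move=> leNk intu; rewrite /pow3_dvd -(subnKC leNk) exprD -mulrA mulrC.
by rewrite mulKf ?expf_neq0 ?pnatr_eq0 // rpredM ?rpredX ?rpred_nat.
Qed.

Lemma pow3_dvdDl N u v : pow3_dvd N u -> pow3_dvd N (u + v) = pow3_dvd N v.
Proof. by rewrite /pow3_dvd mulrDl => /rpredDl. Qed.

Lemma pow3_dvd_expK N m : pow3_dvd N (3%:R ^+ N * m) = (m \is a Num.int).
Proof. by rewrite /pow3_dvd mulrC mulKf // expf_neq0 ?pnatr_eq0. Qed.

Lemma pow3_dvd_mulX N k u : pow3_dvd N u -> pow3_dvd (N + k) (u * 3%:R ^+ k).
Proof.
by rewrite /pow3_dvd exprD invfM mulrACA divff ?mulr1 // expf_neq0 ?pnatr_eq0.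
Qed.

Lemma pow3_dvd_intr N (z : int) : pow3_dvd N z%:~R = (3 ^+ N %| z)%Z.
Proof.
apply/idP/idP => [/intrP[m hm] | /Qint_dvdz]; last by rewrite /pow3_dvd rmorphXn.
apply/dvdzP; exists m; apply: (@intr_inj rat).
have h3 : (3%:R ^+ N : rat) != 0 by rewrite expf_neq0 ?pnatr_eq0.
by rewrite rmorphM rmorphXn /= -hm divfK.
Qed.

Definition digit_poly (d : nat -> nat) (J : nat) : {poly rat} :=
  \poly_(i < J) (d i)%:R.

Lemma digit_polyE d J : digit_poly d J = \sum_(i < J) (d i)%:R *: 'X^i.
Proof. exact: poly_def. Qed.

Lemma digit_polyS d J : digit_poly d J.+1 = digit_poly d J + (d J)%:R *: 'X^J.
Proof. by rewrite !digit_polyE big_ord_recr. Qed.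

(* [polyOver] finds the ring closure of [Num.int] only through its underlying
   predicate. *)
Lemma digit_poly_int d J : digit_poly d J \is a polyOver Num.int_num_subdef.
Proof. by apply: polyOver_poly => i _; rewrite rpred_nat. Qed.

Lemma trunc3E d N : (trunc3 d N)%:~R = \sum_(i < N) ((d i)%:R : rat) * 3%:R ^+ i.
Proof. by rewrite rmorph_sum; apply: eq_bigr => i _; rewrite rmorphM rmorphXn. Qed.

Section TruncatedExp.
Variables (R : numFieldType) (n : nat).

Definition trunc_exp (y : {poly R}) : {poly {poly R}} :=
  \sum_(c < n) (((c`!)%:R : R)^-1 *: y ^+ c) *: 'X^c.

Lemma coef_trunc_exp y c :
  (c < n)%N -> (trunc_exp y)`_c = ((c`!)%:R : R)^-1 *: y ^+ c.
Proof.
move=> ltcn; rewrite /trunc_exp coef_sum (bigD1 (Ordinal ltcn)) //=.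
rewrite coefZ coefXn eqxx mulr1 big1 ?addr0 // => i neqi.
rewrite coefZ coefXn; case: eqP => [eqci|]; last by rewrite mulr0.
by case/eqP: neqi; apply: val_inj.
Qed.

Lemma fact_neq0 k : ((k`!)%:R : R) != 0.
Proof. by rewrite pnatr_eq0 -lt0n fact_gt0. Qed.

Lemma coef_prod_trunc_exp J (Y : nat -> {poly R}) r : (r < n)%N ->
  (\prod_(i < J) trunc_exp (Y i))`_r =
  ((r`!)%:R : R)^-1 *: (\sum_(i < J) Y i) ^+ r.
Proof.
elim: J r => [|J IH] r ltrn.
  rewrite !big_ord0 coefC expr0n; case: r ltrn => [|r] _ /=.
    by rewrite invr1 scale1r.
  by rewrite scaler0.
rewrite !big_ord_recr /= coefM addrC exprDn scaler_sumr; apply: eq_bigr => k _.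
have lekr : (k <= r)%N by rewrite -ltnS.
rewrite IH ?coef_trunc_exp; [|lia|lia].
rewrite -scalerAl -scalerAr scalerA -scaler_nat scalerA [_ ^+ k * _]mulrC.
congr (_ *: _); rewrite -(bin_fact lekr) !natrM.
by field; rewrite !fact_neq0 pnatr_eq0 -lt0n bin_gt0.
Qed.

End TruncatedExp.

Lemma Pkj_coef_cube x k J : Pkj x k J = (digit_poly x J ^+ 3)`_k.
Proof.
pose Y i : {poly rat} := (x i)%:R *: 'X^i.
have -> : digit_poly x J ^+ 3 = 6%:R *: (\prod_(i < J) trunc_exp 4 (Y i))`_3.
  by rewrite coef_prod_trunc_exp // scalerA mulfV // scale1r digit_polyE.
rewrite /trunc_exp bigA_distr_bigA /= coef_sum coefZ coef_sum mulr_sumr.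
rewrite /Pkj big_mkcondr /= big_mkcond /=; apply: eq_bigr => f _.
rewrite scaler_prod prodrXr coefZ coefXn eq_sym.
case: eqP => [sum3|]; last by rewrite mulr0 coef0 mulr0.
rewrite mulr1 (eq_bigr (fun i : 'I_J => (((f i)`!%:R : rat)^-1 * (x i)%:R ^+ f i)
  *: 'X^(i * f i))); last by move=> i _; rewrite /Y exprZn scalerA exprM.
rewrite scaler_prod prodrXr coefZ coefXn eq_sym.
case: eqP => [sumk|]; last by rewrite !mulr0.
by rewrite mulr1 big_split /= prodfV mulrA.
Qed.

Lemma cube_digit_coef_mod3 x J s :
  pow3_dvd 1 ((digit_poly x J ^+ 3)`_s -
    (if (s %% 3 == 0)%N && (s %/ 3 < J)%N then (x (s %/ 3)%N)%:R ^+ 3 else 0)).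
Proof.
elim: J => [|J IH].
  by rewrite /digit_poly poly_def big_ord0 expr0n coef0 andbF subrr /pow3_dvd mul0r.
set p := digit_poly x J; set q := (x J)%:R *: ('X^J : {poly rat}).
have cubeS : digit_poly x J.+1 ^+ 3 = p ^+ 3 + q ^+ 3 + (p ^+ 2 * q + p * q ^+ 2) *+ 3.
  by rewrite digit_polyS -/p -/q; ring.
have int_mixed : p ^+ 2 * q + p * q ^+ 2 \is a polyOver Num.int_num_subdef.
  have qint : q \is a polyOver Num.int_num_subdef.
    by rewrite polyOverZ ?polyOverXn // natr_int.
  by rewrite rpredD ?rpredM ?rpredX ?digit_poly_int.
have diagS : (if (s %% 3 == 0)%N && (s %/ 3 < J.+1)%N then (x (s %/ 3)%N)%:R ^+ 3 else 0)
   = (if (s %% 3 == 0)%N && (s %/ 3 < J)%N then (x (s %/ 3)%N)%:R ^+ 3 else 0)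
     + (q ^+ 3)`_s :> rat.
  rewrite /q exprZn -exprM coefZ coefXn.
  case: (eqVneq s (J * 3)) => [->|neq].
    by rewrite modnMl mulnK // ltnn ltnSn eqxx /= add0r mulr1.
  rewrite mulr0 addr0; congr (if _ then _ else _).
  by apply/idP/idP => /andP[h1 h2]; apply/andP; split => //; lia.
rewrite cubeS diagS coefD coefD coefMn (_ : forall u v w z : rat, u + v + z *+ 3 - (w + v)
  = (u - w) + 3%:R * z); last by move=> *; rewrite -mulr_natl; ring.
apply: pow3_dvdD => //; rewrite -[X in pow3_dvd _ (X * _)]expr1.
exact: pow3_dvd_expM (polyOverP int_mixed _).
Qed.

Section CubeExpansion.
Variables (a x : nat -> nat).
Local Notation "'x_ i" := ((x i)%:R : rat) (at level 8, i at level 2).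
Local Notation "'a_ i" := ((a i)%:R : rat) (at level 8, i at level 2).

Definition xtrunc N := \sum_(i < N) 'x_i * 3%:R ^+ i.
Definition atrunc N := \sum_(i < N) 'a_i * 3%:R ^+ i.
Definition Rsum m := \sum_(k < m.+1) Rk x k * 3%:R ^+ k.
Definition cube_coef J s := (digit_poly x J ^+ 3)`_s.

Lemma Ak_expansion m : 3%:R ^+ m * Ak a x m = atrunc m.+1 + Rsum m.
Proof.
elim: m => [|m IH].
  by rewrite /atrunc /Rsum /Rk !big_ord_recr !big_ord0 /= big_nat1 /=; ring.
rewrite /atrunc /Rsum /= big_ord_recr [X in _ = _ + X]big_ord_recr /=.
by rewrite addrACA -IH exprS; field.
Qed.

Lemma cube_coef_int J s : cube_coef J s \is a Num.int.
Proof. by apply/(polyOverP (p := _ ^+ 3)); rewrite rpredX ?digit_poly_int. Qed.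

Lemma cube_coef0 s : cube_coef 0 s = 0.
Proof. by rewrite /cube_coef /digit_poly poly_def big_ord0 expr0n coef0. Qed.

Lemma xtrunc_cube N : xtrunc N ^+ 3 = \sum_(s < (3 * N).+1) cube_coef N s * 3%:R ^+ s.
Proof.
have -> : xtrunc N = (digit_poly x N).[3%:R] by rewrite horner_poly.
rewrite -horner_exp (horner_coef_wide _ (n := (3 * N).+1)) //.
apply: leq_trans (size_poly_exp_leq _ _) _; rewrite ltnS.
have := size_poly N (fun i => 'x_i); case: (size _) => [|k] /= leN.
  by rewrite mul0n.
by rewrite mulnC leq_mul2l /=; apply: leq_trans leN.
Qed.

Lemma coef_digit_poly_sqr m k : (k <= m)%N -> (digit_poly x m.+1 ^+ 2)`_k = Rk x k.
Proof.
move=> lekm; rewrite expr2 coefM /Rk big_mkord; apply: eq_bigr => j _.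
by have ltjk := ltn_ord j; rewrite !coef_poly ifT ?ifT //; lia.
Qed.

(* With [q = x_m X^m], [X_(m+1)^3 - X_m^3 = 3 q X_(m+1)^2 - 3 q^2 X_(m+1) + q^3];
   for [s <= 2m] only the coefficients of [X_(m+1)^2] of index at most [m] occur,
   and these are the [R_k]. *)
Lemma cube_coef_succ m s : (s <= 2 * m)%N ->
  cube_coef m.+1 s - cube_coef m s =
    (if (m <= s)%N then 3%:R * 'x_m * Rk x (s - m) else 0)
    - (if s == (2 * m)%N then 3%:R * 'x_m ^+ 2 * 'x_0 else 0)
    + (if (s == 0)%N && (m == 0)%N then 'x_0 ^+ 3 else 0).
Proof.
move=> les2m; set p := digit_poly x m.+1; set q := 'x_m *: ('X^m : {poly rat}).
have cube_diff : p ^+ 3 - digit_poly x m ^+ 3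
    = (p ^+ 2 * q) *+ 3 - (p * q ^+ 2) *+ 3 + q ^+ 3.
  have -> : digit_poly x m = p - q by rewrite /p digit_polyS addrK.
  by ring.
rewrite /cube_coef -/p -coefB cube_diff coefD coefB !coefMn.
have -> : (p ^+ 2 * q)`_s = if (m <= s)%N then 'x_m * Rk x (s - m) else 0.
  rewrite /q -scalerAr coefZ coefMXn; case: ltnP => lesm; first by rewrite mulr0.
  by rewrite coef_digit_poly_sqr //; lia.
have -> : (p * q ^+ 2)`_s = if s == (2 * m)%N then 'x_m ^+ 2 * 'x_0 else 0.
  rewrite /q exprZn -exprM -scalerAr coefZ coefMXn.
  case: ltnP => lts; first by rewrite ifF ?mulr0 //; apply/eqP; lia.
  have -> : s = (2 * m)%N by lia.
  by rewrite eqxx mulnC subnn coef_poly.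
have -> : (q ^+ 3)`_s = if (s == 0)%N && (m == 0)%N then 'x_0 ^+ 3 else 0.
  rewrite /q exprZn -exprM coefZ coefXn (_ : (s == m * 3)%N = (s == 0) && (m == 0)%N).
    by case: ifP => [/andP[_ /eqP->]|_]; rewrite ?mulr1 ?mulr0.
  apply/idP/idP => [/eqP ? | /andP[/eqP ? /eqP ?]]; last by apply/eqP; lia.
  by apply/andP; split; apply/eqP; lia.
by case: ifP => _; case: ifP => _; ring.
Qed.

Lemma sum_cube_coef_succ m :
  \sum_(s < (2 * m).+1) (cube_coef m.+1 s - cube_coef m s) * 3%:R ^+ s =
  3%:R * 'x_m * 3%:R ^+ m * Rsum m - 3%:R ^+ (2 * m).+1 * 'x_m ^+ 2 * 'x_0
  + (if m == 0%N then 'x_0 ^+ 3 else 0).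
Proof.
rewrite (eq_bigr (fun s : 'I_(2 * m).+1 =>
    (if (m <= s)%N then 3%:R * 'x_m * Rk x (s - m) * 3%:R ^+ s else 0)
    - (if s == (2 * m)%N :> nat then 3%:R * 'x_m ^+ 2 * 'x_0 * 3%:R ^+ s else 0)
    + (if (s == 0 :> nat) && (m == 0)%N then 'x_0 ^+ 3 * 3%:R ^+ s else 0)));
  last first.
  move=> s _; rewrite cube_coef_succ; last by rewrite -ltnS.
  by rewrite mulrDl mulrBl; do 3 case: ifP => _; rewrite ?mul0r.
rewrite !big_split /= sumrN; congr (_ - _ + _).
- rewrite (_ : (2 * m).+1 = m + m.+1)%N; last by lia.
  rewrite big_split_ord /= big1 => [|s _]; last by rewrite leqNgt ltn_ord.
  rewrite add0r /Rsum mulr_sumr; apply: eq_bigr => k _.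
  by rewrite leq_addr addKn exprD; ring.
- rewrite -big_mkcond (big_ord1_eq _ (fun s => 3%:R * 'x_m ^+ 2 * 'x_0 * 3%:R ^+ s)).
  by rewrite ltnSn /= (exprS _ (2 * m)); ring.
- case: (eqVneq m 0) => [->|m0]; last by rewrite big1 // => s _; rewrite andbF.
  by rewrite big_ord_recl /= big1 ?addr0 ?expr0 ?mulr1 // => s _.
Qed.

Lemma xtrunc_cube_split N :
  xtrunc N ^+ 3 =
    \sum_(m < N) (3%:R * 'x_m * 3%:R ^+ m * Rsum m
       - 3%:R ^+ (2 * m).+1 * 'x_m ^+ 2 * 'x_0 + (if m == 0 :> nat then 'x_0 ^+ 3 else 0))
  + \sum_(s < (3 * N).+1) cube_coef (minn N (s.+1)./2) s * 3%:R ^+ s.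
Proof.
have telescope s : cube_coef N s = cube_coef (minn N (s.+1)./2) s +
    \sum_(minn N (s.+1)./2 <= m < N) (cube_coef m.+1 s - cube_coef m s).
  by rewrite telescope_sumr ?geq_minl // addrC subrK.
rewrite xtrunc_cube (eq_bigr (fun s : 'I_(3 * N).+1 =>
    cube_coef (minn N (s.+1)./2) s * 3%:R ^+ s + \sum_(m < N)
      (if (minn N (s.+1)./2 <= m)%N then (cube_coef m.+1 s - cube_coef m s) * 3%:R ^+ s
       else 0))); last first.
  move=> s _; rewrite telescope mulrDl big_distrl big_geq_mkord.
  by rewrite [in X in X = _]big_mkcond.
rewrite big_split /= addrC; congr (_ + _); rewrite exchange_big /=.
apply: eq_bigr => m _; have ltmN := ltn_ord m.
rewrite -sum_cube_coef_succ (big_ord_widen (3 * N).+1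
  (fun s => (cube_coef m.+1 s - cube_coef m s) * 3%:R ^+ s)); last by lia.
rewrite [in X in _ = X]big_mkcond; apply: eq_bigr => s _.
by rewrite (_ : (minn N (s.+1)./2 <= m)%N = (s < (2 * m).+1)%N) // -divn2; lia.
Qed.

Definition cross_terms N := \sum_(p < N) \sum_(q < N)
  (if (p < q)%N then 3%:R ^+ (p + q).+1 * 'x_p * 'a_q else 0).

Lemma atrunc_xtrunc_split N :
  3%:R * atrunc N * xtrunc N =
  \sum_(m < N) 3%:R * 'x_m * 3%:R ^+ m * atrunc m.+1 + cross_terms N.
Proof.
rewrite /cross_terms -mulrA [atrunc N * _]mulrC {1}/xtrunc big_distrl /= mulr_sumr.
rewrite -big_split /=.
apply: eq_bigr => p _; rewrite /atrunc !mulr_sumr.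
rewrite (big_ord_widen N (fun q => 3%:R * 'x_p * 3%:R ^+ p * ('a_q * 3%:R ^+ q)))
  // [in X in _ = X + _]big_mkcond.
rewrite -big_split /=; apply: eq_bigr => q _; rewrite exprS exprD.
by case: (ltnP q p.+1) => _; rewrite ?addr0 ?add0r; ring.
Qed.
End CubeExpansion.

Section LhsExpansion.
Variables (a x : nat -> nat).
Local Notation "'x_ i" := ((x i)%:R : rat) (at level 8, i at level 2).
Local Notation "'a_ i" := ((a i)%:R : rat) (at level 8, i at level 2).

Definition Lhs_top n :=
  if odd n then 3%:R ^+ n * 'x_(n./2) * (Ak a x n./2 - 'x_0 * 'x_(n./2)) else 0.

Definition Lhs_cross n := 3%:R ^+ n * \sum_(p < n./2) 'x_p * 'a_(n.-1 - p).

(* The cubes [x_(j/3)^3] of the S-terms, scaled by [3^j]: they telescope. *)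
Definition cube_corr s :=
  if (s %% 3 == 0)%N && (0 < s)%N then 'x_(s %/ 3) ^+ 3 * 3%:R ^+ s else 0.

Definition Lhs_cube n := match n with
  | 0 => 'x_0 ^+ 3
  | 1 => 0
  | _ => 3%:R ^+ n.-1 * cube_coef x n./2 n.-1 + cube_corr n - cube_corr n.-1
  end.

Definition top_term m := 3%:R ^+ (2 * m).+1 * 'x_m * (Ak a x m - 'x_0 * 'x_m).

Lemma Sji_scaled n : (2 <= n)%N ->
  Sji x n n./2 * 3%:R ^+ n =
  3%:R ^+ n.-1 * cube_coef x n./2 n.-1 + cube_corr n - cube_corr n.-1.
Proof.
case: n => [|[|k]] // _.
rewrite /Sji Pkj_coef_cube -/(cube_coef _ _ _) /cube_corr /= (exprS _ k.+1).
have [mod2|mod2] := eqVneq (k.+2 %% 3)%N 2.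
  have -> : (k.+2 %% 3 == 0)%N = false by apply/eqP; lia.
  have -> : (k.+1 %% 3 == 0)%N = false by apply/eqP; lia.
  by rewrite /= subr0 addr0; field.
have [mod0|mod0] := eqVneq (k.+2 %% 3)%N 0.
  have -> : (k.+1 %% 3 == 0)%N = false by apply/eqP; lia.
  by rewrite /= subr0; field.
have -> : (k.+1 %% 3 == 0)%N by apply/eqP; lia.
by rewrite /= addr0; field.
Qed.

Lemma Eeven_rev j : Eeven a x j = \sum_(p < j) 'x_p * 'a_((2 * j).-1 - p).
Proof.
rewrite /Eeven big_add1 /= -(big_mkord xpredT (fun p => 'x_p * 'a_((2 * j).-1 - p))).
rewrite (big_nat_rev _ _ 0 j) /=; apply: eq_big_nat => i /andP[_ ltij].
by congr (_ * _); congr ((_ _)%:R); lia.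
Qed.

Lemma Eodd_rev j : Eodd a x j = \sum_(p < j) 'x_p * 'a_(2 * j - p).
Proof.
rewrite /Eodd big_add1 /= -(big_mkord xpredT (fun p => 'x_p * 'a_(2 * j - p))).
rewrite (big_nat_rev _ _ 0 j) /=; apply: eq_big_nat => i /andP[_ ltij].
by congr (_ * _); congr ((_ _)%:R); lia.
Qed.

Lemma Lhs_split n : Lhs a x n * 3%:R ^+ n = Lhs_top n + Lhs_cross n + Lhs_cube n.
Proof.
case: n => [|[|k]].
- by rewrite /Lhs_top /Lhs_cross /= big_ord0 mulr0 expr0 mulr1 !add0r.
- by rewrite /Lhs_top /Lhs_cross /= big_ord0 mulr0 addr0 expr1; ring.
rewrite /Lhs /Lhs_top /Lhs_cross /Lhs_cube -(Sji_scaled (n := k.+2)) //.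
set n := k.+2; case: (boolP (odd n)) => oddn /=.
  by rewrite Eodd_rev (_ : (2 * n./2)%N = n.-1) ?mul2n ?odd_halfK //; ring.
by rewrite Eeven_rev (_ : (2 * n./2)%N = n) ?mul2n ?even_halfK //; ring.
Qed.

Lemma sum_Lhs_top N : \sum_(n < N) Lhs_top n = \sum_(m < N./2) top_term m.
Proof.
elim: N => [|N IH]; first by rewrite !big_ord0.
rewrite big_ord_recr /= IH /Lhs_top uphalf_half.
case: (boolP (odd N)) => oddN /=; last by rewrite addr0 add0n.
by rewrite big_ord_recr /= /top_term mul2n odd_halfK // prednK // odd_gt0.
Qed.

Lemma sum_Lhs_cube N : \sum_(n < N.+1) Lhs_cube n =
  'x_0 ^+ 3 + \sum_(s < N) 3%:R ^+ s * cube_coef x (s.+1)./2 s + cube_corr N.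
Proof.
elim: N => [|N IH].
  by rewrite big_ord_recr big_ord0 /= /cube_corr /= add0r big_ord0 !addr0.
rewrite big_ord_recr /= IH big_ord_recr /=.
case: N IH => [|N] IH; last by rewrite /Lhs_cube /=; ring.
by rewrite /Lhs_cube /cube_corr /= cube_coef0 big_ord0 !mulr0 !addr0.
Qed.

Lemma Lhs_cross_pairs N (n : 'I_N) : Lhs_cross n = \sum_(p < N) \sum_(q < N)
  (if (p < q)%N && ((p + q).+1 == n)%N then 3%:R ^+ n * 'x_p * 'a_q else 0).
Proof.
have ltnN := ltn_ord n.
rewrite /Lhs_cross mulr_sumr
  (big_ord_widen N (fun p => 3%:R ^+ n * ('x_p * 'a_(n.-1 - p)))); last first.
  by rewrite -divn2; lia.
rewrite big_mkcond /=; apply: eq_bigr => p _.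
rewrite (eq_bigr (fun q : 'I_N => if q == (n.-1 - p)%N :> nat then
    (if (p < n./2)%N then 3%:R ^+ n * 'x_p * 'a_q else 0) else 0)); last first.
  move=> q _.
  have [/andP[ltpq /eqP sumpq] | notpair] := boolP ((p < q) && ((p + q).+1 == n))%N.
    have -> : q == (n.-1 - p)%N :> nat by apply/eqP; lia.
    by have -> : (p < n./2)%N by rewrite -divn2; lia.
  case: eqVneq => // eqq; case: ifP => // ltp; case/negP: notpair.
  by rewrite -divn2 in ltp; apply/andP; split; [lia | apply/eqP; lia].
rewrite -big_mkcond
  (big_ord1_eq _ (fun q => if (p < n./2)%N then 3%:R ^+ n * 'x_p * 'a_q else 0)).
rewrite (_ : (n.-1 - p < N)%N); last by lia.
by case: ifP => _; rewrite ?mulr0 ?mulrA.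
Qed.

Lemma pow3_dvd_cross_terms N :
  pow3_dvd N (cross_terms a x N - \sum_(n < N) Lhs_cross n).
Proof.
rewrite (eq_bigr _ (fun n _ => Lhs_cross_pairs n)) exchange_big /=.
rewrite (eq_bigr (fun p : 'I_N => \sum_(q < N) (if (p < q)%N && ((p + q).+1 < N)%N
     then 3%:R ^+ (p + q).+1 * 'x_p * 'a_q else 0))); last first.
  move=> p _; rewrite exchange_big /=; apply: eq_bigr => q _.
  rewrite (eq_bigr (fun n : 'I_N => if n == (p + q).+1 :> nat then
     (if (p < q)%N then 3%:R ^+ (p + q).+1 * 'x_p * 'a_q else 0) else 0)); last first.
    by move=> n _; case: (eqVneq (n : nat) (p + q).+1) => [->|_]; rewrite ?andbT ?andbF.
  rewrite -big_mkcond
    (big_ord1_eq _ (fun _ => if (p < q)%N then 3%:R ^+ (p + q).+1 * 'x_p * 'a_q else 0)).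
  by case: (p < q)%N; case: ((p + q).+1 < N)%N.
rewrite /cross_terms -sumrB; apply: pow3_dvd_sum => p _.
rewrite -sumrB; apply: pow3_dvd_sum => q _.
case: ifP => [ltpq|_]; last by rewrite subr0 /pow3_dvd mul0r.
case: ifP => [_|/negbT]; first by rewrite subrr /pow3_dvd mul0r.
by rewrite -leqNgt subr0 -mulrA => leN; apply: pow3_dvd_expM; rewrite // rpredM ?natr_int.
Qed.

End LhsExpansion.

Section LhsCongruence.
Variables (a x : nat -> nat).
Hypothesis Ak_int : forall k, Ak a x k \is a Num.int.
Local Notation "'x_ i" := ((x i)%:R : rat) (at level 8, i at level 2).

Lemma sum_Lhs_expansion M :
  \sum_(n < M.+1) Lhs a x n * 3%:R ^+ n =
  \sum_(m < M.+1./2) top_term a x m + \sum_(n < M.+1) Lhs_cross a x n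
  + ('x_0 ^+ 3 + \sum_(s < M) 3%:R ^+ s * cube_coef x (s.+1)./2 s + cube_corr x M).
Proof.
rewrite (eq_bigr (fun n : 'I_M.+1 => Lhs_top a x n + Lhs_cross a x n + Lhs_cube x n))
  => [|n _]; last exact: Lhs_split.
by rewrite !big_split /= sum_Lhs_top sum_Lhs_cube.
Qed.

Lemma cubic_trunc_expansion M (N := M.+1) :
  xtrunc x N ^+ 3 + 3%:R * atrunc a N * xtrunc x N =
  \sum_(m < N) top_term a x m + 'x_0 ^+ 3
  + \sum_(s < (3 * N).+1) cube_coef x (minn N (s.+1)./2) s * 3%:R ^+ s
  + cross_terms a x N.
Proof.
rewrite xtrunc_cube_split atrunc_xtrunc_split.
suff -> : \sum_(m < N) top_term a x m + 'x_0 ^+ 3 =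
    \sum_(m < N) (3%:R * 'x_m * 3%:R ^+ m * Rsum x m
       - 3%:R ^+ (2 * m).+1 * 'x_m ^+ 2 * 'x_0 + (if m == 0 :> nat then 'x_0 ^+ 3 else 0))
    + \sum_(m < N) 3%:R * 'x_m * 3%:R ^+ m * atrunc a m.+1 by ring.
rewrite -big_split /= [RHS](eq_bigr (fun m : 'I_N =>
  top_term a x m + (if m == 0 :> nat then 'x_0 ^+ 3 else 0))) => [|m _].
  by rewrite big_split /= [in X in _ = _ + X]big_ord_recl /= big1_eq addr0.
rewrite /top_term (exprS _ (2 * m)) mul2n -addnn exprD.
rewrite (_ : Rsum x m = 3%:R ^+ m * Ak a x m - atrunc a m.+1).
  by set C := (if _ then _ else _); ring. (* [ring] fails on the bare conditional *)
by rewrite Ak_expansion addrC addKr.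
Qed.

Lemma pow3_dvd_top_tail N :
  pow3_dvd N (\sum_(m < N) top_term a x m - \sum_(m < N./2) top_term a x m).
Proof.
have le_half : (N./2 <= N)%N by rewrite -divn2 leq_div.
rewrite -!(big_mkord xpredT (top_term a x)) (big_cat_nat (leq0n _) le_half) /=.
rewrite addrAC subrr add0r big_nat_cond; apply: pow3_dvd_sum => m /andP[/andP[lem _] _].
rewrite /top_term -mulrA; apply: pow3_dvd_expM; first by move: lem; rewrite -divn2; lia.
by rewrite rpredM ?rpredB ?rpredM ?natr_int ?Ak_int.
Qed.

Lemma pow3_dvd_cube_tail M (N := M.+1) :
  pow3_dvd N (\sum_(s < (3 * N).+1) cube_coef x (minn N (s.+1)./2) s * 3%:R ^+ s
              - \sum_(s < M) 3%:R ^+ s * cube_coef x (s.+1)./2 s - cube_corr x M).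
Proof.
have leM : (M <= (3 * N).+1)%N by lia.
rewrite -(big_mkord xpredT (fun s => cube_coef x (minn N (s.+1)./2) s * 3%:R ^+ s)).
rewrite (big_cat_nat (leq0n _) leM) /= big_mkord.
rewrite (eq_bigr (fun s : 'I_M => 3%:R ^+ s * cube_coef x (s.+1)./2 s)); last first.
  move=> s _; rewrite mulrC; congr (_ * cube_coef _ _ _); apply/minn_idPr.
  by have := ltn_ord s; rewrite ?uphalfE -divn2; lia.
rewrite addrC addrK big_ltn; last by lia.
have -> : minn N M.+1./2 = N./2 by apply/minn_idPr; rewrite ?uphalfE -divn2; lia.
set corr := (if (M %% 3 == 0)%N && (M %/ 3 < N./2)%N then 'x_(M %/ 3) ^+ 3 else 0).
have -> : cube_corr x M = corr * 3%:R ^+ M.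
  rewrite /cube_corr /corr (_ : (M %/ 3 < N./2)%N = (0 < M)%N).
    by case: ifP; rewrite ?mul0r.
  by rewrite -divn2; apply/idP/idP; lia.
rewrite addrAC -mulrBl; apply: pow3_dvdD.
  exact: pow3_dvd_mulX (cube_digit_coef_mod3 _ _ _).
rewrite big_nat_cond; apply: pow3_dvd_sum => s /andP[/andP[les _] _].
by rewrite mulrC pow3_dvd_expM ?cube_coef_int.
Qed.

Lemma pow3_dvd_cubic_sub_Lhs N :
  pow3_dvd N (xtrunc x N ^+ 3 + 3%:R * atrunc a N * xtrunc x N
              - \sum_(n < N) Lhs a x n * 3%:R ^+ n).
Proof.
case: N => [|M]; first by rewrite /xtrunc !big_ord0 expr0n mulr0 !subrr /pow3_dvd mul0r.
rewrite cubic_trunc_expansion sum_Lhs_expansion.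
have := pow3_dvdD (pow3_dvdD (pow3_dvd_top_tail M.+1) (pow3_dvd_cube_tail M))
  (pow3_dvd_cross_terms a x M.+1).
by congr (pow3_dvd _ _); ring.
Qed.

End LhsCongruence.

Section CongruenceSystem.
Variables (a b x : nat -> nat).

Lemma Mn_expansion N : 3%:R ^+ N * Mn a b x N =
  \sum_(n < N) Lhs a x n * 3%:R ^+ n - \sum_(n < N) (b n)%:R * 3%:R ^+ n.
Proof.
elim: N => [|N IH]; first by rewrite !big_ord0 mulr0 subrr.
have -> : 3%:R ^+ N.+1 * Mn a b x N.+1 =
    3%:R ^+ N * Mn a b x N + (Lhs a x N - (b N)%:R) * 3%:R ^+ N.
  by rewrite /= exprS; field.
by rewrite IH !big_ord_recr /=; ring.
Qed.

Lemma solves_cubic3_iff_Mn_int : (forall k, Ak a x k \is a Num.int) ->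
  solves_cubic3 a b x <-> forall N, Mn a b x N \is a Num.int.
Proof.
move=> Ak_int; have cubic_Mn N :
    ((trunc3 x N ^+ 3 + 3 * trunc3 a N * trunc3 x N - trunc3 b N)%:~R : rat) =
    (xtrunc x N ^+ 3 + 3%:R * atrunc a N * xtrunc x N
       - \sum_(n < N) Lhs a x n * 3%:R ^+ n) + 3%:R ^+ N * Mn a b x N.
  rewrite Mn_expansion rmorphB rmorphD rmorphXn !rmorphM /= !trunc3E.
  by rewrite (_ : 3%:~R = 3%:R :> rat) // /xtrunc /atrunc; ring.
by split=> sol N; move: (sol N);
  rewrite -pow3_dvd_intr cubic_Mn pow3_dvdDl ?pow3_dvd_expK ?pow3_dvd_cubic_sub_Lhs.
Qed.

Lemma cong3_Mn_succ n :
  cong3 (Lhs a x n + Mn a b x n) (b n)%:R <-> Mn a b x n.+1 \is a Num.int.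
Proof.
split=> [[z eqz] | /intrP[z Mz]].
  by rewrite /= eqz mulrC mulKf ?pnatr_eq0 ?intr_int.
by exists z; rewrite -Mz /=; field.
Qed.

Lemma Mn_int_iff_cong3 : (forall N, Mn a b x N \is a Num.int) <->
  (forall n, cong3 (Lhs a x n + Mn a b x n) (b n)%:R).
Proof.
by split=> [Mint n | cong [|n]];
  [apply/cong3_Mn_succ | apply: rpred0 | apply/cong3_Mn_succ].
Qed.

Lemma Lhs_even j : (1 <= j)%N -> Lhs a x (2 * j) = Eeven a x j + Sji x (2 * j) j.
Proof.
case: j => // j _; rewrite (_ : 2 * j.+1 = (2 * j).+2)%N ?mulnS //=.
by rewrite mul2n odd_double doubleK.
Qed.

Lemma Lhs_odd j : (1 <= j)%N -> Lhs a x (2 * j).+1 =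
  (Ak a x j - (x 0%N)%:R * (x j)%:R) * (x j)%:R + Eodd a x j + Sji x (2 * j).+1 j.
Proof.
case: j => // j _; rewrite (_ : (2 * j.+1).+1 = (2 * j).+3)%N ?mulnS //=.
by rewrite mul2n odd_double uphalf_double.
Qed.

End CongruenceSystem.

Theorem theorem3p9 (a b x : nat -> nat) :
  digits3 a -> a 0%N <> 0%N ->
  digits3 b -> b 0%N <> 0%N ->
  digits3 x -> x 0%N <> 0%N ->
  (forall k : nat, cong3 (Ak a x k) 0) ->
  (solves_cubic3 a b x <->
   [/\ cong3 ((x 0%N)%:R ^+ 3) (b 0%N)%:R,
       cong3 ((x 0%N)%:R * (a 0%N)%:R + Mn a b x 1) (b 1%N)%:R &
       forall j : nat, (1 <= j)%N ->
         cong3 (Eeven a x j + Sji x (2 * j) j + Mn a b x (2 * j)) (b (2 * j)%N)%:R /\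
         cong3 ((Ak a x j - (x 0%N)%:R * (x j)%:R) * (x j)%:R + Eodd a x j
                + Sji x (2 * j).+1 j + Mn a b x (2 * j).+1) (b (2 * j).+1)%:R]).
Proof.
move=> _ _ _ _ _ _ Ak_cong3.
have Ak_int k : Ak a x k \is a Num.int.
  by have [z] := Ak_cong3 k; rewrite subr0 => ->; rewrite rpredM ?natr_int ?intr_int.
rewrite solves_cubic3_iff_Mn_int // Mn_int_iff_cong3.
split=> [cong | [cong0 cong1 cong_j] [|[|n]]].
- split=> [|| j j_gt0]; first by have := cong 0%N; rewrite /= addr0.
    exact: cong 1%N.
  by rewrite -Lhs_even // -Lhs_odd //; split; apply: cong.
- by rewrite /= addr0.
- exact: cong1.
have j_gt0 : (1 <= n.+2./2)%N by [].
rewrite -(odd_double_half n.+2) -mul2n.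
case: (odd n.+2); [rewrite add1n Lhs_odd | rewrite add0n Lhs_even] => //.
all: by case: (cong_j _ j_gt0).
Qed.
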